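(* Let $S,T$ be ordered trees, let $f\colon T\to S$ be a rigid surjection, and let $T'$ be a subtree of $T$. Then $f[T']$ is a subtree of $S$ and $f\upharpoonright T'\colon T'\to f[T']$ is a rigid surjection.
   Context: A tree is a finite, non-empty partially ordered set $(T,\sqsubseteq_T)$ with a smallest element (the root) such that the set of predecessors of each element is linearly ordered; each node counts as its own predecessor and successor. For $v,w\in T$, $v\wedge_T w$ is the $\sqsubseteq_T$-largest common predecessor. A tree is ordered if the set of immediate successors of each node carries a fixed linear order; this induces the lexicographic linear order $\leq_T$: $v\leq_T w$ if $v\sqsubseteq_T w$, and for incomparable $v,w$, $v\leq_T w$ iff the immediate successor of $v\wedge_T w$ below $v$ precedes the one below $w$. A subtree of $T$ is a non-empty subset closed downward under $\sqsubseteq_T$; it is an ordered tree with the inherited orders. A morphism $e\colon S\to T$ satisfies $e(v\wedge_S w)=e(v)\wedge_T e(w)$, is monotone from $\leq_S$ to $\leq_T$, and maps root to root. A function $f\colon T\to S$ is a rigid surjection if there is a morphism $e\colon S\to T$ with $f\circ e={\rm id}_S$ and $e(f(w))\sqsubseteq_T w$ for all $w\in T$. *)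

From mathcomp Require Import all_boot.
Set Implicit Arguments. Unset Strict Implicit. Unset Printing Implicit Defensive.

(* A tree order [tle] (written ⊑) on a finite type; [sib] is the
   (strict) linear order on the immediate successors of each node. *)

Section TreeDefs.
Variable (T : finType) (tle : rel T) (sib : rel T).

Definition isucc_on (A : {set T}) (v w : T) : Prop :=
  [/\ v \in A, w \in A, tle v w, v != w &
      forall u, u \in A -> tle v u -> tle u w -> u = v \/ u = w].

Definition is_root_on (A : {set T}) (r : T) : Prop :=
  r \in A /\ forall v, v \in A -> tle r v.

Definition is_meet_on (A : {set T}) (v w m : T) : Prop :=
  [/\ m \in A, tle m v, tle m w &
      forall u, u \in A -> tle u v -> tle u w -> tle u m].

Definition is_ordered_tree_on (A : {set T}) : Prop :=
  [/\ A != set0,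
      [/\ {in A, reflexive tle},
          {in A &, antisymmetric tle} &
          {in A & &, transitive tle}],
      (exists r, is_root_on A r),
      (forall u v w, u \in A -> v \in A -> w \in A ->
          tle u w -> tle v w -> tle u v \/ tle v u) &
      [/\ (forall a b, a \in A -> b \in A -> sib a b ->
             exists p, isucc_on A p a /\ isucc_on A p b),
          (forall a, ~ sib a a),
          (forall a b c, sib a b -> sib b c -> sib a c) &
          (forall p a b, isucc_on A p a -> isucc_on A p b ->
             a = b \/ sib a b \/ sib b a)]].

Definition lexle_on (A : {set T}) (v w : T) : Prop :=
  tle v w \/
  (~ tle v w /\ ~ tle w v /\
   exists m a b, [/\ is_meet_on A v w m, isucc_on A m a, isucc_on A m b,
                     tle a v /\ tle b w & sib a b]).

Definition is_subtree (A : {set T}) : Prop :=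
  A != set0 /\ forall v w, w \in A -> tle v w -> v \in A.

End TreeDefs.

Record ordTree := OrdTree {
  ot_car :> finType;
  tle : rel ot_car;
  sib : rel ot_car;
  ot_ax : is_ordered_tree_on tle sib [set: ot_car]
}.

Definition subtree (T : ordTree) (A : {set T}) : Prop := is_subtree (@tle T) A.

Definition morphism_on (S T : ordTree) (B : {set S}) (A : {set T}) (e : S -> T) : Prop :=
  [/\ (forall v, v \in B -> e v \in A),
      (forall v w m, v \in B -> w \in B ->
         is_meet_on (@tle S) B v w m -> is_meet_on (@tle T) A (e v) (e w) (e m)),
      (forall v w, v \in B -> w \in B ->
         lexle_on (@tle S) (@sib S) B v w -> lexle_on (@tle T) (@sib T) A (e v) (e w)) &
      (forall r, is_root_on (@tle S) B r -> is_root_on (@tle T) A (e r))].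

Definition rigid_surj_on (T S : ordTree) (A : {set T}) (B : {set S}) (f : T -> S) : Prop :=
  (forall w, w \in A -> f w \in B) /\
  exists e : S -> T,
    [/\ morphism_on B A e,
        (forall v, v \in B -> f (e v) = v) &
        (forall w, w \in A -> tle (e (f w)) w)].

Definition rigid_surj (T S : ordTree) (f : T -> S) : Prop :=
  rigid_surj_on [set: T] [set: S] f.

From mathcomp Require Import all_boot.
Set Implicit Arguments. Unset Strict Implicit. Unset Printing Implicit Defensive.

(* Meets, immediate successors and the lexicographic order of elements of a
   downward closed set are witnessed by elements below them, so they are the
   same in the set as in the whole tree; and the root of a nonempty downward
   closed set is the root of the tree.  Hence the morphism [e] witnessing the
   rigidity of [f] restricts to a morphism [f[T'] -> T'], which is well defined
   and makes [f[T']] downward closed because [e (f w) ⊑ w] and [e] is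
   ⊑-monotone. *)

Definition down_closed (T : finType) (tle : rel T) (A : {set T}) : Prop :=
  forall v w, w \in A -> tle v w -> v \in A.

Section DownClosedRestriction.
Variables (T : finType) (tle sib : rel T) (A : {set T}).
Hypothesis downA : down_closed tle A.

Lemma is_meet_on_down_closed x y m : x \in A ->
  is_meet_on tle A x y m <-> is_meet_on tle [set: T] x y m.
Proof.
move=> xA; split.
- case=> _ mx my maxm; split; rewrite ?inE // => u _ ux uy.
  exact: maxm (downA xA ux) ux uy.
- case=> _ mx my maxm; split=> //; first exact: downA xA mx.
  by move=> u _; apply: maxm; rewrite inE.
Qed.

Lemma isucc_on_down_closed m a : a \in A ->
  isucc_on tle A m a <-> isucc_on tle [set: T] m a.
Proof.
move=> aA; split.
- case=> _ _ ma neq between; split; rewrite ?inE // => u _ mu ua.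
  exact: between (downA aA ua) mu ua.
- case=> _ _ ma neq between; split=> //; first exact: downA aA ma.
  by move=> u _; apply: between; rewrite inE.
Qed.

Lemma lexle_on_down_closed x y : x \in A -> y \in A ->
  lexle_on tle sib A x y <-> lexle_on tle sib [set: T] x y.
Proof.
move=> xA yA.
have witnessE m a b : tle a x -> tle b y ->
    [/\ is_meet_on tle A x y m, isucc_on tle A m a & isucc_on tle A m b] <->
    [/\ is_meet_on tle [set: T] x y m, isucc_on tle [set: T] m a &
        isucc_on tle [set: T] m b].
  move=> ax yb; have aA := downA xA ax; have bA := downA yA yb.
  by split=> -[meet sa sb]; split;
    by [apply/is_meet_on_down_closed | apply/isucc_on_down_closed].
split=> -[xy | [nxy [nyx [m [a [b [meet sa sb [ax yb] ab]]]]]]]; try by left.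
- right; do 2!split=> //; exists m, a, b.
  by have [/(_ (And3 meet sa sb)) [] ] := witnessE m a b ax yb.
- right; do 2!split=> //; exists m, a, b.
  by have [_ /(_ (And3 meet sa sb)) [] ] := witnessE m a b ax yb.
Qed.

End DownClosedRestriction.

Section OrdTreeFacts.
Variable T : ordTree.

Lemma tle_refl (x : T) : tle x x.
Proof. by case: (ot_ax T) => _ [refl _ _] _ _ _; apply: refl; rewrite inE. Qed.

Lemma tle_anti (x y : T) : tle x y -> tle y x -> x = y.
Proof.
case: (ot_ax T) => _ [_ anti _] _ _ _ xy yx.
by apply: anti; rewrite ?inE ?xy ?yx.
Qed.

Lemma exists_root : exists r : T, is_root_on (@tle T) [set: T] r.
Proof. by case: (ot_ax T). Qed.

Lemma is_root_on_down_closed (A : {set T}) r :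
  down_closed (@tle T) A -> is_root_on (@tle T) A r -> is_root_on (@tle T) [set: T] r.
Proof.
move=> downA [rA rmin]; have [r0 [_ r0min]] := exists_root.
have -> : r = r0 by apply: tle_anti; [apply: rmin; apply: downA rA _ | ]; apply: r0min.
by split=> // v _; apply: r0min.
Qed.

End OrdTreeFacts.

Section MorphismRestriction.
Variables (S T : ordTree) (e : S -> T).
Hypothesis morph_e : morphism_on [set: S] [set: T] e.

Lemma morphism_tle_mono v u : tle v u -> tle (e v) (e u).
Proof.
move=> vu; have meet_vu : is_meet_on (@tle S) [set: S] v u v.
  by split; rewrite ?inE ?tle_refl.
case: morph_e => _ meetP _ _.
by have [_ _ evu _] := meetP v u v (in_setT v) (in_setT u) meet_vu.
Qed.

Lemma morphism_on_down_closed (B : {set S}) (A : {set T}) :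
  down_closed (@tle S) B -> down_closed (@tle T) A ->
  (forall v, v \in B -> e v \in A) -> morphism_on B A e.
Proof.
move=> downB downA eBA; case: morph_e => _ meetP lexP rootP.
split=> //.
- move=> v w m vB wB /(is_meet_on_down_closed downB w m vB) meet_vw.
  apply/(is_meet_on_down_closed downA (e w) (e m) (eBA _ vB)).
  by apply: meetP; rewrite ?inE.
- move=> v w vB wB /(lexle_on_down_closed _ downB vB wB) lex_vw.
  apply/(lexle_on_down_closed _ downA (eBA _ vB) (eBA _ wB)).
  by apply: lexP; rewrite ?inE.
- move=> r root_r; have [_ rmin] := rootP r (is_root_on_down_closed downB root_r).
  by case: root_r => rB _; split=> [|v _]; [apply: eBA | apply: rmin; rewrite inE].
Qed.

End MorphismRestriction.

Section RigidSurjImage.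
Variables (S T : ordTree) (f : T -> S) (e : S -> T) (T' : {set T}).
Hypotheses (morph_e : morphism_on [set: S] [set: T] e)
           (feK : forall v, f (e v) = v) (efle : forall w, tle (e (f w)) w).
Hypothesis downT' : down_closed (@tle T) T'.

Lemma section_imset_sub v : v \in f @: T' -> e v \in T'.
Proof. by case/imsetP=> w wT' ->; apply: downT' wT' (efle w). Qed.

Lemma imset_down_closed : down_closed (@tle S) (f @: T').
Proof.
move=> v u /section_imset_sub euT' vu; rewrite -(feK v); apply: imset_f.
exact: downT' euT' (morphism_tle_mono morph_e vu).
Qed.

End RigidSurjImage.

Theorem lemma4p1 (S T : ordTree) (f : T -> S) (T' : {set T}) :
  rigid_surj f -> subtree T' ->
  subtree (f @: T') /\ rigid_surj_on T' (f @: T') f.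
Proof.
move=> [_ [e [morph_e feK efle]]] [T'n0 downT'].
have {}feK v : f (e v) = v by apply: feK; rewrite inE.
have {}efle w : tle (e (f w)) w by apply: efle; rewrite inE.
have downB := imset_down_closed morph_e feK efle downT'.
split.
  split=> //; case/set0Pn: T'n0 => w wT'.
  by apply/set0Pn; exists (f w); apply: imset_f.
split=> [w wT'|]; first exact: imset_f.
exists e; split=> [|v _|w _] //.
apply: (morphism_on_down_closed morph_e downB downT').
exact: (section_imset_sub efle downT').
Qed.
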